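(* Let $R$ be a reduced commutative ring, $a\in R$, and $d\ge -1$ an integer. Then $\mathrm{dimv}\,R\le d$ if and only if $\mathrm{dimv}\,R_{\{a\}}\le d$.
   Context: All rings are commutative with $1$. For a reduced ring $A$ and $a\in A$, write $a^\perp=\mathrm{Ann}_A(a)$ and $(a^\perp)^\perp=\mathrm{Ann}_A(\mathrm{Ann}_A(a))$, and set $A_{\{a\}}:=A/a^\perp\times A/(a^\perp)^\perp$ (the canonical map $A\to A_{\{a\}}$ is injective and $A_{\{a\}}$ is reduced). $\mathrm{dimv}$: a graded rational monomial order on $\mathbb Z^{k}$ is given by a matrix $M\in\mathrm{Mat}_k(\mathbb N)$ which is invertible in $\mathrm{Mat}_k(\mathbb Q)$ and whose first row has all entries $>0$, by setting $e<_M f \iff Me<_{\mathrm{lex}}Mf$ (lexicographic order). For a nonzero polynomial $P\in A[X_0,\dots,X_n]$ its trailing coefficient (for $<_M$) is the coefficient of the $<_M$-smallest monomial occurring in $P$. For $n\ge 0$, $\mathrm{dimv}\,A\le n$ means: for a graded rational monomial order $<_M$ on $\mathbb Z^{n+1}$ and for all $x_0,\dots,x_n\in A$ there is $P\in A[X_0,\dots,X_n]$ with $P(x_0,\dots,x_n)=0$ whose trailing coefficient for $<_M$ equals $1$ (this condition does not depend on the choice of $M$). $\mathrm{dimv}\,A\le -1$ means that $A$ is trivial. *)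

From HB Require Import structures.
From mathcomp Require Import all_boot all_order all_algebra.
From mathcomp Require Import generic_quotient.
From mathcomp Require Import boolp.
Set Implicit Arguments. Unset Strict Implicit. Unset Printing Implicit Defensive.
Import Order.TTheory GRing.Theory Num.Theory.
Local Open Scope ring_scope.
Local Open Scope quotient_scope.

Definition reduced (A : comPzRingType) : Prop :=
  forall (x : A) (k : nat), x ^+ k = 0 -> x = 0.

(** Possibly-trivial quotients are allowed (A / A is the zero ring), hence we
    work with comPzRingType (rings where 0 = 1 is allowed). *)
Record ideal (A : comPzRingType) := Ideal {
  ideal_mem :> A -> Prop;
  ideal_0 : ideal_mem 0;
  ideal_D : forall x y, ideal_mem x -> ideal_mem y -> ideal_mem (x + y);
  ideal_M : forall r x, ideal_mem x -> ideal_mem (r * x) }.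

Section Quotient.
Variables (A : comPzRingType) (I : ideal A).

Lemma ideal_N x : I x -> I (- x).
Proof. by move=> Ix; rewrite -mulN1r; apply: ideal_M. Qed.

Definition qrel (x y : A) : bool := `[< I (x - y) >].

Lemma qrel_refl : reflexive qrel.
Proof. by move=> x; apply/asboolP; rewrite subrr; apply: ideal_0. Qed.
Lemma qrel_sym : symmetric qrel.
Proof.
move=> x y; apply/asboolP/asboolP => /ideal_N; by rewrite opprB.
Qed.
Lemma qrel_trans : transitive qrel.
Proof.
move=> y x z /asboolP Hxy /asboolP Hyz; apply/asboolP.
by have := ideal_D Hxy Hyz; rewrite addrA addrNK.
Qed.

Canonical qrel_equiv := EquivRel qrel qrel_refl qrel_sym qrel_trans.

Definition quot := {eq_quot qrel}.
HB.instance Definition _ := Choice.on quot.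
HB.instance Definition _ := Quotient.on quot.
HB.instance Definition _ := EqQuotient.on quot.

Local Notation pi := (\pi_quot).

Lemma piP (x y : A) : (pi x = pi y) <-> I (x - y).
Proof.
split; first by move/eqmodP/asboolP.
by move=> H; apply/eqmodP/asboolP.
Qed.

Lemma reprP (x : A) : I (repr (pi x) - x).
Proof. by apply/piP; rewrite reprK. Qed.

Definition qzero : quot := pi 0.
Definition qone : quot := pi 1.
Definition qadd (u v : quot) : quot := pi (repr u + repr v).
Definition qopp (u : quot) : quot := pi (- repr u).
Definition qmul (u v : quot) : quot := pi (repr u * repr v).

Lemma qaddE x y : qadd (pi x) (pi y) = pi (x + y).
Proof.
apply/piP; rewrite /qadd.
by rewrite opprD addrACA; apply: ideal_D; apply: reprP.
Qed.
Lemma qoppE x : qopp (pi x) = pi (- x).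
Proof. apply/piP; have := ideal_N (reprP x); by rewrite opprB addrC opprK. Qed.
Lemma qmulE x y : qmul (pi x) (pi y) = pi (x * y).
Proof.
apply/piP; rewrite /qmul.
set a := repr (pi x); set b := repr (pi y).
have -> : a * b - x * y = b * (a - x) + x * (b - y).
  by rewrite !mulrBr [b * a]mulrC [b * x]mulrC addrA subrK.
by apply: ideal_D; apply: ideal_M; apply: reprP.
Qed.

Lemma qaddA : associative qadd.
Proof.
move=> u v w; elim/quotW: u => x; elim/quotW: v => y; elim/quotW: w => z.
by rewrite [qadd (pi y) _]qaddE [qadd (pi x) (pi y)]qaddE !qaddE addrA.
Qed.
Lemma qaddC : commutative qadd.
Proof. by move=> u v; elim/quotW: u => x; elim/quotW: v => y; rewrite !qaddE addrC. Qed.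
Lemma qadd0 : left_id qzero qadd.
Proof. by move=> u; elim/quotW: u => x; rewrite /qzero qaddE add0r. Qed.
Lemma qaddN : left_inverse qzero qopp qadd.
Proof. by move=> u; elim/quotW: u => x; rewrite qoppE qaddE addNr. Qed.

HB.instance Definition _ := GRing.isZmodule.Build quot qaddA qaddC qadd0 qaddN.

Lemma qmulA : associative qmul.
Proof.
move=> u v w; elim/quotW: u => x; elim/quotW: v => y; elim/quotW: w => z.
by rewrite [qmul (pi y) _]qmulE [qmul (pi x) (pi y)]qmulE !qmulE mulrA.
Qed.
Lemma qmulC : commutative qmul.
Proof. by move=> u v; elim/quotW: u => x; elim/quotW: v => y; rewrite !qmulE mulrC. Qed.
Lemma qmul1 : left_id qone qmul.
Proof. by move=> u; elim/quotW: u => x; rewrite /qone qmulE mul1r. Qed.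
Lemma qmulDl : left_distributive qmul (@GRing.add quot).
Proof.
move=> u v; elim/quotW: u => x; elim/quotW: v => y; elim/quotW=> z.
rewrite [qmul (pi x) _]qmulE [qmul (pi y) _]qmulE.
have -> : (pi x + pi y : quot) = pi (x + y) by apply: qaddE.
by rewrite qmulE mulrDl -qaddE.
Qed.

HB.instance Definition _ :=
  GRing.Zmodule_isComPzRing.Build quot qmulA qmulC qmul1 qmulDl.

End Quotient.

Section Annihilators.
Variables (A : comPzRingType) (a : A).

Definition ann_pred (x : A) : Prop := x * a = 0.
Definition ann2_pred (x : A) : Prop := forall y, ann_pred y -> x * y = 0.

Lemma ann_0 : ann_pred 0. Proof. by rewrite /ann_pred mul0r. Qed.
Lemma ann_D x y : ann_pred x -> ann_pred y -> ann_pred (x + y).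
Proof. by rewrite /ann_pred mulrDl => -> ->; rewrite addr0. Qed.
Lemma ann_M r x : ann_pred x -> ann_pred (r * x).
Proof. by rewrite /ann_pred -mulrA => ->; rewrite mulr0. Qed.

Lemma ann2_0 : ann2_pred 0. Proof. by move=> y _; rewrite mul0r. Qed.
Lemma ann2_D x y : ann2_pred x -> ann2_pred y -> ann2_pred (x + y).
Proof. by move=> Hx Hy z Hz; rewrite mulrDl Hx // Hy // addr0. Qed.
Lemma ann2_M r x : ann2_pred x -> ann2_pred (r * x).
Proof. by move=> Hx z Hz; rewrite -mulrA Hx // mulr0. Qed.

Definition ann : ideal A := Ideal ann_0 ann_D ann_M.
Definition ann2 : ideal A := Ideal ann2_0 ann2_D ann2_M.

End Annihilators.

(** A_{a} := A / a^perp  x  A / (a^perp)^perp *)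
Definition ring_split (A : comPzRingType) (a : A) : comPzRingType :=
  (quot (ann a) * quot (ann2 a))%type.

(** * Graded rational monomial orders on Z^k (here on exponent vectors in N^k) *)
Definition expvec (k : nat) := {ffun 'I_k -> nat}.

Definition mxact (k : nat) (M : 'M[nat]_k) (e : expvec k) (i : 'I_k) : nat :=
  (\sum_(j < k) M i j * e j)%N.

Definition ltM (k : nat) (M : 'M[nat]_k) (e f : expvec k) : Prop :=
  exists i : 'I_k, (forall j : 'I_k, (j < i)%N -> mxact M e j = mxact M f j)
                   /\ (mxact M e i < mxact M f i)%N.

Definition graded_rational (k : nat) (M : 'M[nat]_k.+1) : Prop :=
  map_mx (fun m : nat => m%:R : rat) M \in unitmx
  /\ forall j : 'I_k.+1, (0 < M ord0 j)%N.

(** A polynomial of A[X_0..X_{k-1}] is given by the (duplicate-free) list [s]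
    of the monomials occurring in it and their coefficients [c]. *)
Definition peval (A : comPzRingType) (k : nat) (s : seq (expvec k))
  (c : expvec k -> A) (x : 'I_k -> A) : A :=
  \sum_(e <- s) c e * \prod_(i < k) x i ^+ e i.

Definition trailing_coef_one (A : comPzRingType) (k : nat) (M : 'M[nat]_k)
  (s : seq (expvec k)) (c : expvec k -> A) : Prop :=
  exists2 e0, e0 \in s &
    c e0 = 1 /\ forall e, e \in s -> e != e0 -> ltM M e0 e.

Definition dimv_le_nat (A : comPzRingType) (n : nat) : Prop :=
  forall M : 'M[nat]_n.+1, graded_rational M ->
  forall x : 'I_n.+1 -> A,
  exists (s : seq (expvec n.+1)) (c : expvec n.+1 -> A),
    [/\ uniq s, peval s c x = 0 & trailing_coef_one M s c].

Definition dimv_le (A : comPzRingType) (d : int) : Prop :=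
  match d with
  | Posz n => dimv_le_nat A n
  | Negz _ => (1 : A) = 0
  end.

(** A ring surjection A -> B maps a polynomial with trailing coefficient 1
    vanishing at a lift of x to one vanishing at x, and a product of two such
    polynomials is again one, its trailing monomial being the sum of the two
    trailing monomials (monomial orders are compatible with addition).  Hence
    dimv can only drop under quotients and finite products, which gives
    dimv R_{a} <= dimv R.  Conversely, given x in R, lift polynomials P and Q
    that vanish at x modulo a^perp and modulo (a^perp)^perp respectively;
    then P(x) Q(x) lies in a^perp (a^perp)^perp = 0, so P Q works for R. *)
From Pilot Require Import Defs.
From HB Require Import structures.
From mathcomp Require Import all_boot all_order all_algebra generic_quotient.
Set Implicit Arguments. Unset Strict Implicit. Unset Printing Implicit Defensive.
Import GRing.Theory.
Local Open Scope ring_scope.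
Local Open Scope quotient_scope.

Section QuotientMap.
Variables (A : comPzRingType) (I : ideal A).

Definition piq (x : A) : quot I := \pi_(quot I) x.

Lemma piq_zmod : zmod_morphism piq.
Proof.
move=> x y; rewrite /piq.
change (\pi_(quot I) (x - y) = qadd (\pi_(quot I) x) (qopp (\pi_(quot I) y))).
by rewrite qoppE qaddE.
Qed.

Lemma piq_monoid : monoid_morphism piq.
Proof.
split=> // x y; rewrite /piq.
change (\pi_(quot I) (x * y) = qmul (\pi_(quot I) x) (\pi_(quot I) y)).
by rewrite qmulE.
Qed.

HB.instance Definition _ := GRing.isZmodMorphism.Build A (quot I) piq piq_zmod.
HB.instance Definition _ := GRing.isMonoidMorphism.Build A (quot I) piq piq_monoid.

Lemma piqK : cancel (@repr _ (quot I)) piq.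
Proof. exact: reprK. Qed.

Lemma piq_eq0 x : piq x = 0 <-> I x.
Proof.
have -> : (0 : quot I) = piq 0 by rewrite rmorph0.
by have := Defs.piP I x 0; rewrite subr0.
Qed.

End QuotientMap.

Section MonomialOrder.
Variables (k : nat) (M : 'M[nat]_k).

Definition addv (e f : expvec k) : expvec k := [ffun i => (e i + f i)%N].

Lemma addvC : commutative addv.
Proof. by move=> e f; apply/ffunP => i; rewrite !ffunE addnC. Qed.

Lemma mxact_addv e f i : mxact M (addv e f) i = (mxact M e i + mxact M f i)%N.
Proof. by rewrite /mxact -big_split; apply: eq_bigr => j _; rewrite ffunE mulnDr. Qed.

Lemma ltM_irr e : ~ ltM M e e.
Proof. by case=> i [_]; rewrite ltnn. Qed.

Lemma ltM_trans e f g : ltM M e f -> ltM M f g -> ltM M e g.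
Proof.
case=> i [eqi lti] [j [eqj ltj]].
case: (ltngtP i j) => [ij|ji|/val_inj ij].
- exists i; split; last by rewrite -(eqj _ ij).
  by move=> l li; rewrite eqi // eqj //; apply: ltn_trans li ij.
- exists j; split; last by rewrite (eqi _ ji).
  by move=> l lj; rewrite eqi ?eqj //; apply: ltn_trans lj ji.
- subst j; exists i; split; last exact: ltn_trans lti ltj.
  by move=> l li; rewrite eqi ?eqj.
Qed.

Lemma ltM_add2r g e f : ltM M e f -> ltM M (addv e g) (addv f g).
Proof.
case=> i [eqi lti]; exists i; rewrite !mxact_addv ltn_add2r; split=> //.
by move=> l li; rewrite !mxact_addv eqi.
Qed.

Lemma ltM_add2l g e f : ltM M e f -> ltM M (addv g e) (addv g f).
Proof. by rewrite !(addvC g); apply: ltM_add2r. Qed.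

End MonomialOrder.

Section PolynomialProduct.
Variables (A : comPzRingType) (k : nat).
Implicit Types (s : seq (expvec k)) (c : expvec k -> A) (x : 'I_k -> A).

Lemma eq_peval s c c' x x' : c =1 c' -> x =1 x' -> peval s c x = peval s c' x'.
Proof.
move=> eqc eqx; apply: eq_bigr => e _; rewrite eqc.
by congr (_ * _); apply: eq_bigr => i _; rewrite eqx.
Qed.

Lemma monomial_addv x e f :
  \prod_(i < k) x i ^+ addv e f i =
  (\prod_(i < k) x i ^+ e i) * \prod_(i < k) x i ^+ f i.
Proof. by rewrite -big_split; apply: eq_bigr => i _; rewrite ffunE exprD. Qed.

Definition pmul_supp s1 s2 := undup [seq addv e f | e <- s1, f <- s2].

Definition pmul_coef s1 c1 s2 c2 (g : expvec k) : A :=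
  \sum_(e <- s1) \sum_(f <- s2) (if addv e f == g then c1 e * c2 f else 0).

Lemma peval_pmul s1 c1 s2 c2 x :
  peval (pmul_supp s1 s2) (pmul_coef s1 c1 s2 c2) x =
  peval s1 c1 x * peval s2 c2 x.
Proof.
rewrite /peval big_distrl /=.
transitivity (\sum_(e <- s1) \sum_(f <- s2)
    c1 e * c2 f * \prod_(i < k) x i ^+ addv e f i); last first.
  apply: eq_bigr => e _; rewrite big_distrr /=; apply: eq_bigr => f _.
  by rewrite monomial_addv mulrACA.
under eq_bigr => g _ do rewrite big_distrl /=.
under eq_bigr => g _ do under eq_bigr => e _ do rewrite big_distrl /=.
rewrite exchange_big /=; apply: eq_big_seq => e es.
rewrite exchange_big /=; apply: eq_big_seq => f fs.
rewrite (bigD1_seq (addv e f)) ?undup_uniq ?mem_undup ?allpairs_f //= eqxx.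
rewrite [X in _ + X]big1 ?addr0 // => g; rewrite eq_sym => /negbTE ->.
by rewrite mul0r.
Qed.

Lemma trailing_coef_one_pmul (M : 'M[nat]_k) s1 c1 s2 c2 :
  uniq s1 -> uniq s2 -> trailing_coef_one M s1 c1 -> trailing_coef_one M s2 c2 ->
  trailing_coef_one M (pmul_supp s1 s2) (pmul_coef s1 c1 s2 c2).
Proof.
move=> u1 u2 [e0 e0s [c1e0 min1]] [f0 f0s [c2f0 min2]].
have lt0 e f : e \in s1 -> f \in s2 -> (e != e0) || (f != f0) ->
    ltM M (addv e0 f0) (addv e f).
  move=> es fs; case: (eqVneq e e0) => [->|ne] /=.
    by move=> nf; apply/ltM_add2l/min2.
  case: (eqVneq f f0) => [-> _|nf _]; first by apply/ltM_add2r/min1.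
  exact: ltM_trans (ltM_add2r f0 (min1 e es ne)) (ltM_add2l e (min2 f fs nf)).
have sum_ne0 e f : e \in s1 -> f \in s2 -> (e != e0) || (f != f0) ->
    (if addv e f == addv e0 f0 then c1 e * c2 f else 0) = 0.
  move=> es fs nef; case: eqP => // eq_ef.
  by have := lt0 e f es fs nef; rewrite eq_ef => /ltM_irr.
exists (addv e0 f0); first by rewrite mem_undup allpairs_f.
split.
- rewrite /pmul_coef (bigD1_seq e0) //= [X in _ + X]big1_seq ?addr0; last first.
    move=> e /andP [ne es]; rewrite big1_seq // => f /andP [_ fs].
    by apply: sum_ne0; rewrite ?ne.
  rewrite (bigD1_seq f0) //= [X in _ + X]big1_seq ?addr0; last first.
    by move=> f /andP [nf fs]; apply: sum_ne0; rewrite ?nf ?orbT.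
  by rewrite eqxx c1e0 c2f0 mulr1.
- move=> g; rewrite mem_undup => /allpairsP [[e f] [/= es fs ->]] ne.
  apply: lt0 => //; rewrite -negb_and; apply: contra ne.
  by case/andP => /eqP -> /eqP ->.
Qed.

End PolynomialProduct.

Lemma peval_rmorph (A B : comPzRingType) (phi : {rmorphism A -> B}) k
  (s : seq (expvec k)) c x : phi (peval s c x) = peval s (phi \o c) (phi \o x).
Proof.
rewrite /peval rmorph_sum; apply: eq_bigr => e _; rewrite rmorphM rmorph_prod /=.
by congr (_ * _); apply: eq_bigr => i _; rewrite rmorphXn.
Qed.

Lemma trailing_coef_one_rmorph (A B : comPzRingType) (phi : {rmorphism A -> B})
  k (M : 'M[nat]_k) s c :
  trailing_coef_one M s c -> trailing_coef_one M s (phi \o c).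
Proof. by case=> e0 e0s [c1 min]; exists e0 => //=; rewrite c1 rmorph1. Qed.

Lemma dimv_le_nat_surj (A B : comPzRingType) (phi : {rmorphism A -> B})
  (phi' : B -> A) n : cancel phi' phi -> dimv_le_nat A n -> dimv_le_nat B n.
Proof.
move=> phiK dimA M Mgr x; have [s [c [us P0 tr]]] := dimA M Mgr (phi' \o x).
exists s, (phi \o c); split=> //; last exact: trailing_coef_one_rmorph.
transitivity (peval s (phi \o c) (phi \o (phi' \o x))).
  by apply: eq_peval => // i /=; rewrite phiK.
by rewrite -peval_rmorph P0 rmorph0.
Qed.

Lemma dimv_le_nat_quot (A : comPzRingType) (I : ideal A) n :
  dimv_le_nat A n -> dimv_le_nat (quot I) n.
Proof. exact/dimv_le_nat_surj/piqK. Qed.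

Lemma dimv_le_nat_prod (A B : comPzRingType) n :
  dimv_le_nat A n -> dimv_le_nat B n -> dimv_le_nat (A * B)%type n.
Proof.
move=> dimA dimB M Mgr x.
have [s1 [c1 [u1 P1 [e1 e1s [c1e1 min1]]]]] := dimA M Mgr (fst \o x).
have [s2 [c2 [u2 P2 [e2 e2s [c2e2 min2]]]]] := dimB M Mgr (snd \o x).
pose d1 e : A * B := (c1 e, 1); pose d2 e : A * B := (1, c2 e).
have t1 : trailing_coef_one M s1 d1 by exists e1; rewrite // /d1 c1e1.
have t2 : trailing_coef_one M s2 d2 by exists e2; rewrite // /d2 c2e2.
exists (pmul_supp s1 s2), (pmul_coef s1 d1 s2 d2).
split; [exact: undup_uniq | rewrite peval_pmul | exact: trailing_coef_one_pmul].
have Q1 : (peval s1 d1 x).1 = 0 by rewrite (peval_rmorph (@fst A B)).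
have Q2 : (peval s2 d2 x).2 = 0 by rewrite (peval_rmorph (@snd A B)).
move: (peval s1 d1 x) (peval s2 d2 x) Q1 Q2 => [p1 p2] [q1 q2] /= -> ->.
by rewrite [RHS]/0 /=; congr (_, _); rewrite ?mul0r ?mulr0.
Qed.

Lemma dimv_le_nat_fst (A B : comPzRingType) n :
  dimv_le_nat (A * B)%type n -> dimv_le_nat A n.
Proof. by apply: (@dimv_le_nat_surj _ _ fst (fun y => (y, 0))). Qed.

Lemma dimv_le_nat_snd (A B : comPzRingType) n :
  dimv_le_nat (A * B)%type n -> dimv_le_nat B n.
Proof. by apply: (@dimv_le_nat_surj _ _ snd (fun y => (0, y))). Qed.

Lemma dimv_le_nat_quot_vanish (A : comPzRingType) (I : ideal A) n
  (M : 'M[nat]_n.+1) (x : 'I_n.+1 -> A) :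
  dimv_le_nat (quot I) n -> graded_rational M ->
  exists s c, [/\ uniq s, I (peval s c x) & trailing_coef_one M s c].
Proof.
move=> dimI Mgr; have [s [c [us P0 [e0 e0s [c1 min]]]]] := dimI M Mgr (piq I \o x).
pose d e := if e == e0 then 1 else repr (c e).
exists s, d; split=> //; last by exists e0; rewrite // /d eqxx.
apply/piq_eq0; rewrite peval_rmorph -P0; apply: eq_peval => // e /=.
by rewrite /d; case: eqP => [->|_]; rewrite ?rmorph1 ?c1 ?piqK.
Qed.

Lemma dimv_le_nat_quot_prod (A : comPzRingType) (I J : ideal A) n :
  (forall u v, I u -> J v -> u * v = 0) ->
  dimv_le_nat (quot I * quot J)%type n -> dimv_le_nat A n.
Proof.
move=> IJ0 dimIJ M Mgr x.
have [s1 [c1 [u1 P1 t1]]] := dimv_le_nat_quot_vanish x (dimv_le_nat_fst dimIJ) Mgr.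
have [s2 [c2 [u2 P2 t2]]] := dimv_le_nat_quot_vanish x (dimv_le_nat_snd dimIJ) Mgr.
exists (pmul_supp s1 s2), (pmul_coef s1 c1 s2 c2).
split; [exact: undup_uniq | rewrite peval_pmul | exact: trailing_coef_one_pmul].
exact: IJ0.
Qed.

Lemma ann_mul_ann2 (A : comPzRingType) (a u v : A) :
  ann a u -> ann2 a v -> u * v = 0.
Proof. by move=> au /(_ u au); rewrite mulrC. Qed.

Lemma trivial_rmorph (A B : comPzRingType) (phi : {rmorphism A -> B}) :
  (1 : A) = 0 -> (1 : B) = 0.
Proof. by move=> A10; rewrite -(rmorph1 phi) A10 rmorph0. Qed.

Lemma ring_split_trivial (R : comPzRingType) (a : R) :
  (1 : ring_split a) = 0 -> (1 : R) = 0.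
Proof.
move=> split10.
have /piq_eq0 ann1 : piq (ann a) 1 = 0 by rewrite rmorph1; apply: (congr1 fst split10).
have /piq_eq0 ann21 : piq (ann2 a) 1 = 0 by rewrite rmorph1; apply: (congr1 snd split10).
have a0 : a = 0 by move: ann1; rewrite /= /ann_pred mul1r.
by rewrite -[LHS]mulr1; apply: ann21; rewrite /= /ann_pred a0 mulr0.
Qed.

Theorem lemma3p3 (R : comPzRingType) (a : R) (d : int) :
  reduced R -> (-1 <= d)%R ->
  (dimv_le R d <-> dimv_le (ring_split a) d).
Proof.
move=> _ _; case: d => [n|n] /=; split.
- by move=> dimR; apply: dimv_le_nat_prod; apply: dimv_le_nat_quot.
- exact/dimv_le_nat_quot_prod/ann_mul_ann2.
- move=> R10; change ((1, 1) = (0, 0) :> ring_split a).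
  by rewrite (trivial_rmorph (piq (ann a)) R10) (trivial_rmorph (piq (ann2 a)) R10).
- exact: ring_split_trivial.
Qed.
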